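(* Let the language contain a constant and let $t_1,t_2,\dots$ be a fixed enumeration of all closed terms. Let $E$ be a sentence containing only weak quantifier occurrences. In every term structure there is an $n$ such that $\|E_m\|=\|E\|$ for all $m\ge n$.
   Context: The propositional setting is as follows. - A lattice-oriented signature $\mathcal{L}$ is a finite set of connectives. Each connective $c$ has an arity $n_c$ and a polarity $p_c:\{1,\dots,n_c\}\to\{-,+\}$. It includes binary $\lor,\land,\to$ with $p_\lor\equiv p_\land\equiv +$, $p_\to(1)=-$ and $p_\to(2)=+$. - A finite $\mathcal{L}$-lattice $\mathbf{A}$ is a finite set $L$ with operations $c^L$ such that $(L,\lor^L,\land^L)$ is a lattice with order $\le$ and top $1$. Each $c^L$ is monotone in the arguments with polarity $+$ and antitone in those with polarity $-$. Moreover $1\le a\to b$ iff $a\le b$. The first-order setting is as follows. - Fix a finite $\mathcal{L}$-lattice $\mathbf{A}$ and a predicate language with predicate and function symbols of given arities. - Terms and formulas are built as usual from object variables using the connectives of $\mathcal{L}$ and the quantifiers $\forall,\exists$. - A structure consists of a nonempty set $S$, maps $P^S:S^n\to L$ for the $n$-ary predicate symbols, and maps $f^S:S^n\to S$ for the $n$-ary function symbols. - An evaluation $v$ maps variables to $S$. Formulas get values in $L$: connectives are interpreted by $c^L$; $\|\forall x\varphi\|_v=\bigwedge_{a\in S}\|\varphi\|_{v[x\to a]}$ and $\|\exists x\varphi\|_v=\bigvee_{a\in S}\|\varphi\|_{v[x\to a]}$. - A term structure is a structure whose domain $S$ is the set of all closed terms, with each function symbol interpreted as the corresponding term constructor. -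 An occurrence in a formula is positive or negative: the whole formula is positive, and going into argument $i$ of a connective $c$ keeps the polarity if $p_c(i)=+$ and flips it if $p_c(i)=-$. Quantifiers do not change polarity. - Weak quantifier occurrences are positive occurrences of $\exists$ and negative occurrences of $\forall$; strong ones are positive $\forall$ and negative $\exists$. - The $n$-th expansion $E_n$ of $E$ is obtained by replacing, from the inside out, every subformula $\exists xA(x)$ by $\bigvee_{i=1}^nA(t_i)$ and every subformula $\forall xA(x)$ by $\bigwedge_{i=1}^nA(t_i)$. *)

From HB Require Import structures.
From mathcomp Require Import all_boot all_order.
From Stdlib Require Import ClassicalEpsilon.
Set Implicit Arguments. Unset Strict Implicit. Unset Printing Implicit Defensive.
Import Order.Theory.
Local Open Scope order_scope.

Section Syntax.
Variables (Fsym : Type) (farity : Fsym -> nat) (Psym : Type) (parity : Psym -> nat).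
(* Lattice-oriented signature: the three mandatory binary connectives plus a
   finite set C of further connectives with arity and polarity (true = +). *)
Variables (C : finType) (oarity : C -> nat) (opol : forall c, 'I_(oarity c) -> bool).

Inductive conn := COr | CAnd | CImp | COther (c : C).

Definition arity (k : conn) : nat :=
  match k with COr | CAnd | CImp => 2 | COther c => oarity c end.

Definition pol (k : conn) : 'I_(arity k) -> bool :=
  match k as k0 return 'I_(arity k0) -> bool with
  | COr => fun _ => true
  | CAnd => fun _ => true
  | CImp => fun i => val i != 0%N   (* p(1) = -, p(2) = + *)
  | COther c => @opol c
  end.

Inductive term := Var (x : nat) | App (f : Fsym) (a : 'I_(farity f) -> term).

(* closed terms: the domain of term structures *)
Inductive cterm := CApp (f : Fsym) (a : 'I_(farity f) -> cterm).

Inductive form :=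
  | Pred (p : Psym) (a : 'I_(parity p) -> term)
  | Conn (k : conn) (a : 'I_(arity k) -> form)
  | All (x : nat) (A : form)
  | Ex (x : nat) (A : form).

Fixpoint free_t (x : nat) (t : term) : Prop :=
  match t with Var y => y = x | App f a => exists i, free_t x (a i) end.

Fixpoint free_f (x : nat) (A : form) : Prop :=
  match A with
  | Pred p a => exists i, free_t x (a i)
  | Conn k a => exists i, free_f x (a i)
  | All y B => y <> x /\ free_f x B
  | Ex y B => y <> x /\ free_f x B
  end.

Definition sentence (A : form) : Prop := forall x, ~ free_f x A.

(* weak_only pos A : every quantifier occurrence in A is weak, where the
   polarity of A itself is pos (true = positive). *)
Fixpoint weak_only (pos : bool) (A : form) : Prop :=
  match A with
  | Pred _ _ => True
  | Conn k a => forall i, weak_only (if pol i then pos else ~~ pos) (a i)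
  | All _ B => pos = false /\ weak_only pos B
  | Ex _ B => pos = true /\ weak_only pos B
  end.

Fixpoint emb (s : cterm) : term :=
  match s with CApp f a => @App f (fun i => emb (a i)) end.

Fixpoint subst_t (x : nat) (s : cterm) (t : term) : term :=
  match t with
  | Var y => if y == x then emb s else Var y
  | App f a => @App f (fun i => subst_t x s (a i))
  end.

Fixpoint subst (x : nat) (s : cterm) (A : form) : form :=
  match A with
  | Pred p a => @Pred p (fun i => subst_t x s (a i))
  | Conn k a => @Conn k (fun i => subst x s (a i))
  | All y B => if y == x then All y B else All y (subst x s B)
  | Ex y B => if y == x then Ex y B else Ex y (subst x s B)
  end.

Definition Or2 (A B : form) : form :=
  Conn (k := COr) (fun i : 'I_2 => if val i == 0%N then A else B).
Definition And2 (A B : form) : form :=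
  Conn (k := CAnd) (fun i : 'I_2 => if val i == 0%N then A else B).

Fixpoint bigOr (A : form) (s : seq form) : form :=
  match s with [::] => A | B :: s' => Or2 A (bigOr B s') end.
Fixpoint bigAnd (A : form) (s : seq form) : form :=
  match s with [::] => A | B :: s' => And2 A (bigAnd B s') end.

(* n-th expansion w.r.t. the enumeration t_1, t_2, ... given by
   t_i := t (i - 1), i.e. t_1, ..., t_n are t 0, ..., t (n-1).
   (Only meaningful for n >= 1.) *)
Fixpoint expand (t : nat -> cterm) (n : nat) (A : form) : form :=
  match A with
  | Pred p a => @Pred p a
  | Conn k a => @Conn k (fun i => expand t n (a i))
  | All x B => let B' := expand t n B in
      bigAnd (subst x (t 0%N) B') [seq subst x (t i) B' | i <- iota 1 n.-1]
  | Ex x B => let B' := expand t n B in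
      bigOr (subst x (t 0%N) B') [seq subst x (t i) B' | i <- iota 1 n.-1]
  end.

End Syntax.

Definition pb (P : Prop) : bool :=
  if excluded_middle_informative P then true else false.

Section Semantics.
Variables (Fsym : Type) (farity : Fsym -> nat) (Psym : Type) (parity : Psym -> nat).
Variables (C : finType) (oarity : C -> nat) (opol : forall c, 'I_(oarity c) -> bool).
(* finite L-lattice: a finite lattice with top, an implication, and
   interpretations of the other connectives *)
Variables (d : Order.disp_t) (L : finTBLatticeType d) (imp : L -> L -> L)
  (ointerp : forall c, ('I_(oarity c) -> L) -> L).

Definition L_lattice_axioms : Prop :=
  (forall a a' b, a' <= a -> imp a b <= imp a' b) /\
  (forall a b b', b <= b' -> imp a b <= imp a b') /\
  (forall a b, (\top <= imp a b) = (a <= b)) /\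
  (forall c (i : 'I_(oarity c)) (a b : 'I_(oarity c) -> L),
      (forall j, j != i -> a j = b j) ->
      (if @opol c i then a i <= b i else b i <= a i) ->
      ointerp a <= ointerp b).

Definition cinterp (k : conn C) : ('I_(arity oarity k) -> L) -> L :=
  match k as k0 return ('I_(arity oarity k0) -> L) -> L with
  | COr => fun a => a ord0 `|` a ord_max
  | CAnd => fun a => a ord0 `&` a ord_max
  | CImp => fun a => imp (a ord0) (a ord_max)
  | COther c => @ointerp c
  end.

(* infimum / supremum in the finite lattice of a family indexed by closed
   terms: the meet / join of the (finite) set of its values *)
Definition infS (f : cterm farity -> L) : L :=
  \meet_(a : L | pb (exists s, f s = a)) a.
Definition supS (f : cterm farity -> L) : L :=
  \join_(a : L | pb (exists s, f s = a)) a.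

Fixpoint teval (v : nat -> cterm farity) (t : term farity) : cterm farity :=
  match t with
  | Var x => v x
  | App f a => @CApp _ _ f (fun i => teval v (a i))
  end.

Definition upd (v : nat -> cterm farity) (x : nat) (s : cterm farity) :=
  fun y => if y == x then s else v y.

(* value of a formula in the term structure with predicate interpretation P *)
Variable (P : forall p, ('I_(parity p) -> cterm farity) -> L).

Fixpoint eval (A : form farity parity oarity) (v : nat -> cterm farity) : L :=
  match A with
  | Pred p a => P (fun i => teval v (a i))
  | Conn k a => cinterp (fun i => eval (a i) v)
  | All x B => infS (fun s => eval B (upd v x s))
  | Ex x B => supS (fun s => eval B (upd v x s))
  end.

End Semantics.

(* Since L is finite, the supremum in a weak (positive) [Ex x B] is a join of
   finitely many values, each attained at some enumerated term [t i].  A finite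
   join of instances never exceeds that supremum, and propagating this through
   the connectives according to their polarity shows that expansion can only
   lower a weakly quantified formula in positive and raise it in negative
   position.  Hence, once the expansion index exceeds the indices of witnesses
   for all the finitely many values, and the inner expansions have stabilised at
   those witnesses, the finite join is exactly the supremum; dually for negative
   [All]. *)

From mathcomp Require Import all_boot all_order.
From Stdlib Require Import FunctionalExtensionality ClassicalEpsilon Classical.
Set Implicit Arguments. Unset Strict Implicit. Unset Printing Implicit Defensive.
Import Order.Theory.
Local Open Scope order_scope.

Definition eventually (p : nat -> Prop) : Prop :=
  exists n, forall m, (n <= m)%N -> p m.

Lemma eventually_forall (T : finType) (p : T -> nat -> Prop) :
  (forall a, eventually (p a)) -> eventually (fun m => forall a, p a m).
Proof.
move=> ev_p.
suff [N hN] : exists N, forall m, (N <= m)%N -> forall a, a \in enum T -> p a m.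
  by exists N => m /hN hm a; apply: hm; rewrite mem_enum.
elim: (enum T) => [|a s [N hN]]; first by exists 0%N.
have [n hn] := ev_p a.
exists (maxn n N) => m; rewrite geq_max => /andP[nm Nm] b.
by rewrite in_cons => /predU1P[->|/(hN m Nm)//]; apply: hn.
Qed.

Lemma le_coordinatewise (d1 d2 : Order.disp_t) (T : porderType d1) (U : porderType d2)
  n (pol : 'I_n -> bool) (F : ('I_n -> T) -> U) :
  (forall i (a b : 'I_n -> T), (forall j, j != i -> a j = b j) ->
     (if pol i then a i <= b i else b i <= a i) -> F a <= F b) ->
  forall a b, (forall i, if pol i then a i <= b i else b i <= a i) -> F a <= F b.
Proof.
move=> F_mono1 a b le_ab.
pose mix k (j : 'I_n) := if (j < k)%N then b j else a j.
have mix_ge : forall k, (k <= n)%N -> F a <= F (mix k).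
  elim=> [_|k IHk kn].
    by have -> : mix 0%N = a by apply: functional_extensionality.
  apply: le_trans (IHk (ltnW kn)) _; apply: (F_mono1 (Ordinal kn)) => [j jk|].
    have jk_nat : (j == k :> nat) = false by apply: negbTE; rewrite -(inj_eq val_inj) in jk.
    by rewrite /mix ltnS [(j <= k)%N]leq_eqVlt jk_nat.
  by rewrite /mix /= ltnn ltnSn; apply: le_ab.
have -> : b = mix n by apply: functional_extensionality => j; rewrite /mix ltn_ord.
exact: mix_ge.
Qed.

Lemma pbT (Q : Prop) : Q -> pb Q.
Proof. by rewrite /pb; case: excluded_middle_informative. Qed.

Section SupInf.
Variables (Fsym : Type) (farity : Fsym -> nat) (d : Order.disp_t) (L : finTBLatticeType d).
Implicit Types (f : cterm farity -> L).

Lemma le_supS f s : f s <= supS f.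
Proof. by apply: (joins_sup (fun a => a)); apply: pbT; exists s. Qed.

Lemma supS_le f x : (forall s, f s <= x) -> supS f <= x.
Proof.
move=> le_fx; apply/joinsP => a.
by rewrite /pb; case: excluded_middle_informative => // -[s fs] _; rewrite -fs; apply: le_fx.
Qed.

Lemma joins_eventually_supS (t : nat -> cterm farity)
    (t_onto : forall s, exists i, t i = s) f (g : nat -> nat -> L) :
  (forall m i, (i < m)%N -> g m i <= f (t i)) ->
  (forall i, eventually (fun m => g m i = f (t i))) ->
  eventually (fun m => \join_(0 <= i < m) g m i = supS f).
Proof.
move=> g_le g_ev.
have reached : forall a : L, eventually (fun m =>
    forall s, f s = a -> exists2 i, (i < m)%N & g m i = a).
  move=> a; have [[s <-]|no_s] := classic (exists s, f s = a); last first.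
    by exists 0%N => m _ s fs; case: no_s; exists s.
  have [i <-] := t_onto s; have [n hn] := g_ev i.
  exists (maxn i.+1 n) => m; rewrite geq_max => /andP[im nm] s' _.
  by exists i; last apply: hn.
have [N hN] := eventually_forall reached.
exists N => m /hN hm; apply/le_anti/andP; split.
  apply/joinsP_seq => i; rewrite mem_index_iota => /andP[_ im] _.
  exact: le_trans (g_le m i im) (le_supS _ _).
apply: supS_le => s; have [i im <-] := hm _ s erefl.
by apply: joins_sup_seq; rewrite ?mem_index_iota.
Qed.

End SupInf.

Lemma le_infS (Fsym : Type) (farity : Fsym -> nat) d (L : finTBLatticeType d)
  (f : cterm farity -> L) s : infS f <= f s.
Proof. exact: (@le_supS _ _ _ L^d). Qed.

Lemma meets_eventually_infS (Fsym : Type) (farity : Fsym -> nat) d (L : finTBLatticeType d)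
    (t : nat -> cterm farity) (t_onto : forall s, exists i, t i = s)
    (f : cterm farity -> L) (g : nat -> nat -> L) :
  (forall m i, (i < m)%N -> f (t i) <= g m i) ->
  (forall i, eventually (fun m => g m i = f (t i))) ->
  eventually (fun m => \meet_(0 <= i < m) g m i = infS f).
Proof. exact: (@joins_eventually_supS _ _ _ L^d). Qed.

Section Expansion.
Variables (Fsym : Type) (farity : Fsym -> nat) (Psym : Type) (parity : Psym -> nat)
  (C : finType) (oarity : C -> nat)
  (d : Order.disp_t) (L : finTBLatticeType d) (imp : L -> L -> L)
  (ointerp : forall c, ('I_(oarity c) -> L) -> L)
  (P : forall p, ('I_(parity p) -> cterm farity) -> L).

Notation ev := (eval imp ointerp P).
Notation fm := (form farity parity oarity).
Implicit Types (v w : nat -> cterm farity) (s : cterm farity) (A B : fm).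

Lemma teval_emb v s : teval v (emb s) = s.
Proof.
elim: s => f a IH /=; congr CApp; apply: functional_extensionality => i; exact: IH.
Qed.

Lemma teval_subst v x s (u : term farity) :
  teval v (subst_t x s u) = teval (upd v x s) u.
Proof.
elim: u => [y|f a IH] /=; first by rewrite /upd; case: (y == x); rewrite ?teval_emb.
congr CApp; apply: functional_extensionality => i; exact: IH.
Qed.

Lemma upd_upd v x s s' : upd (upd v x s) x s' = upd v x s'.
Proof. by apply: functional_extensionality => y; rewrite /upd; case: (y == x). Qed.

Lemma upd_comm v x y s s' : y != x -> upd (upd v x s) y s' = upd (upd v y s') x s.
Proof.
move=> yx; apply: functional_extensionality => z; rewrite /upd.
by case: (eqVneq z y) => [->|//]; rewrite (negbTE yx).
Qed.

Lemma eval_subst A x s v : ev (subst x s A) v = ev A (upd v x s).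
Proof.
elim: A v => [p a|k a IH|y B IH|y B IH] v /=.
- by congr P; apply: functional_extensionality => i; apply: teval_subst.
- by congr cinterp; apply: functional_extensionality => i; apply: IH.
all: case: eqP => [->|/eqP yx] /=; f_equal; apply: functional_extensionality => s'.
all: by rewrite ?upd_upd // IH (upd_comm _ _ _ yx).
Qed.

Lemma teval_ext (u : term farity) v w :
  (forall x, free_t x u -> v x = w x) -> teval v u = teval w u.
Proof.
elim: u => [y|f a IH] /= vw; first exact: vw.
congr CApp; apply: functional_extensionality => i; apply: IH => x xi.
by apply: vw; exists i.
Qed.

Lemma eval_ext A v w : (forall x, free_f x A -> v x = w x) -> ev A v = ev A w.
Proof.
elim: A v w => [p a|k a IH|y B IH|y B IH] v w /= vw.
- congr P; apply: functional_extensionality => i; apply: teval_ext => x xi.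
  by apply: vw; exists i.
- congr cinterp; apply: functional_extensionality => i; apply: IH => x xi.
  by apply: vw; exists i.
all: f_equal; apply: functional_extensionality => s; apply: IH => x xB.
all: by rewrite /upd; case: eqP => // xy; apply: vw; split => // yx; apply: xy.
Qed.

Lemma not_free_emb x s : ~ free_t x (emb s).
Proof. by elim: s => f a IH /= [i]; apply: IH. Qed.

Lemma free_subst_t y x s (u : term farity) :
  free_t y (subst_t x s u) -> y <> x /\ free_t y u.
Proof.
elim: u => [z|f a IH] /=; first by case: eqP => [_ /not_free_emb []|zx <-].
by move=> [i /IH [yx yi]]; split; last exists i.
Qed.

Lemma free_subst y x s A : free_f y (subst x s A) -> y <> x /\ free_f y A.
Proof.
elim: A => [p a|k a IH|z B IH|z B IH] /=.
- by move=> [i /free_subst_t [yx yi]]; split; last exists i.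
- by move=> [i /IH [yx yi]]; split; last exists i.
all: by case: eqP => [->|_] /= [zy yB]; [split=> // yz; apply: zy; rewrite yz | case: (IH yB)].
Qed.

Lemma free_bigOr y (F : nat -> fm) r A :
  free_f y (bigOr A [seq F i | i <- r]) -> free_f y A \/ exists i, free_f y (F i).
Proof.
elim: r A => [|j r IH] A /=; first by left.
move=> [i]; case: (val i == 0%N) => [|/IH [yF|[k yF]]]; by [left | right; exists j | right; exists k].
Qed.

Lemma free_bigAnd y (F : nat -> fm) r A :
  free_f y (bigAnd A [seq F i | i <- r]) -> free_f y A \/ exists i, free_f y (F i).
Proof.
elim: r A => [|j r IH] A /=; first by left.
move=> [i]; case: (val i == 0%N) => [|/IH [yF|[k yF]]]; by [left | right; exists j | right; exists k].
Qed.

Lemma free_expand (t : nat -> cterm farity) m y A : free_f y (expand t m A) -> free_f y A.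
Proof.
elim: A => [p a|k a IH|z B IH|z B IH] //=; first by move=> [i /IH yi]; exists i.
- by case/free_bigAnd => [|[i]] /free_subst [yz /IH yB]; split => // zy; apply: yz.
- by case/free_bigOr => [|[i]] /free_subst [yz /IH yB]; split => // zy; apply: yz.
Qed.

Lemma eval_bigOr A (s : seq fm) v : ev (bigOr A s) v = \join_(B <- A :: s) ev B v.
Proof.
elim: s A => [|B s IH] A /=; first by rewrite big_seq1.
by rewrite big_cons IH.
Qed.

Lemma eval_bigAnd A (s : seq fm) v : ev (bigAnd A s) v = \meet_(B <- A :: s) ev B v.
Proof.
elim: s A => [|B s IH] A /=; first by rewrite big_seq1.
by rewrite big_cons IH.
Qed.

Variable t : nat -> cterm farity.

Lemma eval_expand_Ex m x B v : (0 < m)%N ->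
  ev (expand t m (Ex x B)) v = \join_(0 <= i < m) ev (expand t m B) (upd v x (t i)).
Proof.
case: m => // m _; rewrite /= eval_bigOr /index_iota subn0.
by rewrite -(map_cons (fun i => subst x (t i) _)) big_map; under eq_bigr do rewrite eval_subst.
Qed.

Lemma eval_expand_All m x B v : (0 < m)%N ->
  ev (expand t m (All x B)) v = \meet_(0 <= i < m) ev (expand t m B) (upd v x (t i)).
Proof.
case: m => // m _; rewrite /= eval_bigAnd /index_iota subn0.
by rewrite -(map_cons (fun i => subst x (t i) _)) big_map; under eq_bigr do rewrite eval_subst.
Qed.

End Expansion.

Section WeakQuantifiers.
Variables (Fsym : Type) (farity : Fsym -> nat) (Psym : Type) (parity : Psym -> nat)
  (C : finType) (oarity : C -> nat) (opol : forall c, 'I_(oarity c) -> bool)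
  (d : Order.disp_t) (L : finTBLatticeType d) (imp : L -> L -> L)
  (ointerp : forall c, ('I_(oarity c) -> L) -> L)
  (P : forall p, ('I_(parity p) -> cterm farity) -> L).
Hypothesis HL : L_lattice_axioms opol imp ointerp.
Variable t : nat -> cterm farity.
Hypothesis t_onto : forall s, exists i, t i = s.

Notation ev := (eval imp ointerp P).
Notation fm := (form farity parity oarity).

Lemma cinterp_mono (k : conn C) (a b : 'I_(arity oarity k) -> L) :
  (forall i, if pol opol i then a i <= b i else b i <= a i) ->
  cinterp imp ointerp a <= cinterp imp ointerp b.
Proof.
have [imp_anti [imp_mono [_ ointerp_mono1]]] := HL.
case: k a b => [| | |c] a b /= le_ab.
- exact: leU2 (le_ab ord0) (le_ab ord_max).
- exact: leI2 (le_ab ord0) (le_ab ord_max).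
- exact: le_trans (imp_anti _ _ _ (le_ab ord0)) (imp_mono _ _ _ (le_ab ord_max)).
- exact: le_coordinatewise (ointerp_mono1 c) _ _ le_ab.
Qed.

Lemma eval_expand_polarity m pos (A : fm) : (0 < m)%N -> weak_only opol pos A ->
  forall v, if pos then ev (expand t m A) v <= ev A v else ev A v <= ev (expand t m A) v.
Proof.
move=> m_gt0; elim: A pos => [p a|k a IH|x B IH|x B IH] pos /= A_weak v.
- by case: pos.
- case: pos A_weak => A_weak; apply: cinterp_mono => i;
    by have := IH i _ (A_weak i) v; case: (pol opol i).
- case: A_weak => -> B_weak; rewrite eval_expand_All //.
  apply/meetsP_seq => i _ _.
  exact: le_trans (le_infS _ (t i)) (IH false B_weak _).
- case: A_weak => -> B_weak; rewrite eval_expand_Ex //.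
  apply/joinsP_seq => i _ _.
  exact: le_trans (IH true B_weak _) (le_supS _ (t i)).
Qed.

Lemma eval_expand_eventually pos (A : fm) : weak_only opol pos A ->
  forall v, eventually (fun m => ev (expand t m A) v = ev A v).
Proof.
elim: A pos => [p a|k a IH|x B IH|x B IH] pos /= A_weak v.
- by exists 0%N.
- have [N hN] := eventually_forall (fun i => IH i _ (A_weak i) v).
  by exists N => m /hN hm; congr cinterp; apply: functional_extensionality.
- case: A_weak => -> B_weak.
  have [N hN] := @meets_eventually_infS _ _ _ _ _ t_onto
    (fun s => ev B (upd v x s)) (fun m i => ev (expand t m B) (upd v x (t i)))
    (fun m i im => eval_expand_polarity (leq_ltn_trans (leq0n i) im) B_weak _)
    (fun i => IH false B_weak _).
  exists N.+1 => m Nm; have m_gt0 : (0 < m)%N by apply: leq_trans Nm.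
  by rewrite eval_expand_All // hN // ltnW.
- case: A_weak => -> B_weak.
  have [N hN] := @joins_eventually_supS _ _ _ _ _ t_onto
    (fun s => ev B (upd v x s)) (fun m i => ev (expand t m B) (upd v x (t i)))
    (fun m i im => eval_expand_polarity (leq_ltn_trans (leq0n i) im) B_weak _)
    (fun i => IH true B_weak _).
  exists N.+1 => m Nm; have m_gt0 : (0 < m)%N by apply: leq_trans Nm.
  by rewrite eval_expand_Ex // hN // ltnW.
Qed.

End WeakQuantifiers.

Theorem mainTheorem15
  (Fsym : Type) (farity : Fsym -> nat) (Psym : Type) (parity : Psym -> nat)
  (C : finType) (oarity : C -> nat) (opol : forall c, 'I_(oarity c) -> bool)
  (d : Order.disp_t) (L : finTBLatticeType d) (imp : L -> L -> L)
  (ointerp : forall c, ('I_(oarity c) -> L) -> L)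
  (HL : L_lattice_axioms opol imp ointerp)
  (hconst : exists f : Fsym, farity f = 0)
  (t : nat -> cterm farity) (ht : forall s : cterm farity, exists i, t i = s)
  (E : form farity parity oarity)
  (hsent : sentence E) (hweak : weak_only opol true E)
  (P : forall p, ('I_(parity p) -> cterm farity) -> L) :
  exists n, (0 < n)%N /\
    forall m, (n <= m)%N -> forall v : nat -> cterm farity,
      eval imp ointerp P (expand t m E) v = eval imp ointerp P E v.
Proof.
pose v0 := fun _ : nat => t 0%N.
have [n hn] := eval_expand_eventually P HL ht hweak v0.
have eval_v0 A v : sentence A -> eval imp ointerp P A v = eval imp ointerp P A v0.
  by move=> closedA; apply: eval_ext => x /closedA.
exists n.+1; split => // m nm v.
have sent_expand : sentence (expand t m E) by move=> x /free_expand /hsent.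
by rewrite !eval_v0 // hn // ltnW.
Qed.
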